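(* Let $s$ be a stream type and $p$ a prefix with $p : s$, and let $s'$ be the stream type with $\delta_p s \sim s'$. Then $\mathrm{emp}(s) \cdot p \sim p$ and $p \cdot \mathrm{emp}(s') \sim p$.
   Context: Stream types are generated by $s,t ::= 1 \mid \varepsilon \mid s\cdot t \mid s\,\|\,t \mid s+t \mid s^\star$. Prefixes are generated by $p ::= \mathtt{oneEmp} \mid \mathtt{oneFull} \mid \mathtt{epsEmp} \mid \mathtt{par}(p,p') \mid \mathtt{catA}(p) \mid \mathtt{catB}(p,p') \mid \mathtt{sumEmp} \mid \mathtt{inl}(p) \mid \mathtt{inr}(p) \mid \mathtt{starEmp} \mid \mathtt{starDone} \mid \mathtt{stA}(p) \mid \mathtt{stB}(p,p')$. Maximality (inductive): $\mathtt{epsEmp}$, $\mathtt{oneFull}$, $\mathtt{starDone}$ are maximal; $\mathtt{par}(p_1,p_2)$, $\mathtt{catB}(p_1,p_2)$, $\mathtt{stB}(p_1,p_2)$ are maximal if $p_1$ and $p_2$ are; $\mathtt{inl}(p)$, $\mathtt{inr}(p)$ are maximal if $p$ is. Prefix typing $p : s$ (inductive): $\mathtt{epsEmp}:\varepsilon$; $\mathtt{oneEmp}:1$; $\mathtt{oneFull}:1$; $\mathtt{par}(p_1,p_2): s\|t$ if $p_1:s$, $p_2:t$; $\mathtt{catA}(p): s\cdot t$ if $p:s$; $\mathtt{catB}(p_1,p_2): s\cdot t$ if $p_1:s$, $p_1$ maximal, $p_2:t$; $\mathtt{sumEmp}: s+t$; $\mathtt{inl}(p):s+t$ if $p:s$;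 $\mathtt{inr}(p):s+t$ if $p:t$; $\mathtt{starEmp}:s^\star$; $\mathtt{starDone}:s^\star$; $\mathtt{stA}(p):s^\star$ if $p:s$; $\mathtt{stB}(p,p'):s^\star$ if $p:s$, $p$ maximal, $p':s^\star$. Empty prefix: $\mathrm{emp}(\varepsilon)=\mathtt{epsEmp}$, $\mathrm{emp}(1)=\mathtt{oneEmp}$, $\mathrm{emp}(s\|t)=\mathtt{par}(\mathrm{emp}(s),\mathrm{emp}(t))$, $\mathrm{emp}(s+t)=\mathtt{sumEmp}$, $\mathrm{emp}(s\cdot t)=\mathtt{catA}(\mathrm{emp}(s))$, $\mathrm{emp}(s^\star)=\mathtt{starEmp}$. Derivative relation $\delta_p s \sim s'$ (inductive): $\delta_{\mathtt{epsEmp}}\varepsilon\sim\varepsilon$; $\delta_{\mathtt{oneEmp}}1\sim 1$; $\delta_{\mathtt{oneFull}}1\sim\varepsilon$; $\delta_{\mathtt{par}(p_1,p_2)}(s\|t)\sim s'\|t'$ if $\delta_{p_1}s\sim s'$, $\delta_{p_2}t\sim t'$; $\delta_{\mathtt{catA}(p)}(s\cdot t)\sim s'\cdot t$ if $\delta_p s\sim s'$; $\delta_{\mathtt{catB}(p_1,p_2)}(s\cdot t)\sim t'$ if $\delta_{p_2}t\sim t'$; $\delta_{\mathtt{sumEmp}}(s+t)\sim s+t$; $\delta_{\mathtt{inl}(p)}(s+t)\sim s'$ if $\delta_p s\sim s'$; $\delta_{\mathtt{inr}(p)}(s+t)\sim t'$ if $\delta_p t\sim t'$; $\delta_{\mathtt{starEmp}}s^\star\sim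 s^\star$; $\delta_{\mathtt{starDone}}s^\star\sim\varepsilon$; $\delta_{\mathtt{stA}(p)}s^\star\sim s'\cdot s^\star$ if $\delta_p s\sim s'$; $\delta_{\mathtt{stB}(p,p')}s^\star\sim s'$ if $\delta_{p'}s^\star\sim s'$. (For $p:s$ such $s'$ exists and is unique.) Prefix concatenation $p\cdot p'\sim p''$ (inductive): $\mathtt{epsEmp}\cdot\mathtt{epsEmp}\sim\mathtt{epsEmp}$; $\mathtt{oneEmp}\cdot p\sim p$ whenever $p:1$; $\mathtt{oneFull}\cdot\mathtt{epsEmp}\sim\mathtt{oneFull}$; $\mathtt{par}(p_1,p_2)\cdot\mathtt{par}(p_1',p_2')\sim\mathtt{par}(p_1'',p_2'')$ if $p_i\cdot p_i'\sim p_i''$ for $i=1,2$; $\mathtt{catA}(p)\cdot\mathtt{catA}(p')\sim\mathtt{catA}(p'')$ if $p\cdot p'\sim p''$; $\mathtt{catA}(p)\cdot\mathtt{catB}(p',q)\sim\mathtt{catB}(p'',q)$ if $p\cdot p'\sim p''$; $\mathtt{catB}(p,p')\cdot p''\sim\mathtt{catB}(p,p''')$ if $p'\cdot p''\sim p'''$; $\mathtt{sumEmp}\cdot p\sim p$; $\mathtt{inl}(p)\cdot p'\sim\mathtt{inl}(p'')$ if $p\cdot p'\sim p''$; $\mathtt{inr}(p)\cdot p'\sim\mathtt{inr}(p'')$ if $p\cdot p'\sim p''$; $\mathtt{starEmp}\cdot p\sim p$; $\mathtt{starDone}\cdot\mathtt{epsEmp}\sim\mathtt{starDone}$; $\mathtt{stA}(p)\cdot\mathtt{catA}(p')\sim\mathtt{stA}(p'')$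 if $p\cdot p'\sim p''$; $\mathtt{stA}(p)\cdot\mathtt{catB}(p',q)\sim\mathtt{stB}(p'',q)$ if $p\cdot p'\sim p''$; $\mathtt{stB}(p,p')\cdot p''\sim\mathtt{stB}(p,p''')$ if $p'\cdot p''\sim p'''$. *)

Inductive ty : Type :=
| TOne : ty
| TEps : ty
| TCat : ty -> ty -> ty
| TPar : ty -> ty -> ty
| TSum : ty -> ty -> ty
| TStar : ty -> ty.

Inductive prefix : Type :=
| oneEmp : prefix
| oneFull : prefix
| epsEmp : prefix
| par : prefix -> prefix -> prefix
| catA : prefix -> prefix
| catB : prefix -> prefix -> prefix
| sumEmp : prefix
| inl : prefix -> prefix
| inr : prefix -> prefix
| starEmp : prefix
| starDone : prefix
| stA : prefix -> prefix
| stB : prefix -> prefix -> prefix.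

Inductive maximal : prefix -> Prop :=
| max_epsEmp : maximal epsEmp
| max_oneFull : maximal oneFull
| max_starDone : maximal starDone
| max_par : forall p1 p2, maximal p1 -> maximal p2 -> maximal (par p1 p2)
| max_catB : forall p1 p2, maximal p1 -> maximal p2 -> maximal (catB p1 p2)
| max_stB : forall p1 p2, maximal p1 -> maximal p2 -> maximal (stB p1 p2)
| max_inl : forall p, maximal p -> maximal (inl p)
| max_inr : forall p, maximal p -> maximal (inr p).

Inductive has_type : prefix -> ty -> Prop :=
| ty_epsEmp : has_type epsEmp TEps
| ty_oneEmp : has_type oneEmp TOne
| ty_oneFull : has_type oneFull TOne
| ty_par : forall p1 p2 s t, has_type p1 s -> has_type p2 t ->
    has_type (par p1 p2) (TPar s t)
| ty_catA : forall p s t, has_type p s -> has_type (catA p) (TCat s t)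
| ty_catB : forall p1 p2 s t, has_type p1 s -> maximal p1 -> has_type p2 t ->
    has_type (catB p1 p2) (TCat s t)
| ty_sumEmp : forall s t, has_type sumEmp (TSum s t)
| ty_inl : forall p s t, has_type p s -> has_type (inl p) (TSum s t)
| ty_inr : forall p s t, has_type p t -> has_type (inr p) (TSum s t)
| ty_starEmp : forall s, has_type starEmp (TStar s)
| ty_starDone : forall s, has_type starDone (TStar s)
| ty_stA : forall p s, has_type p s -> has_type (stA p) (TStar s)
| ty_stB : forall p p' s, has_type p s -> maximal p -> has_type p' (TStar s) ->
    has_type (stB p p') (TStar s).

Fixpoint emp (s : ty) : prefix :=
  match s with
  | TEps => epsEmp
  | TOne => oneEmp
  | TPar s t => par (emp s) (emp t)
  | TSum _ _ => sumEmp
  | TCat s _ => catA (emp s)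
  | TStar _ => starEmp
  end.

Inductive deriv : prefix -> ty -> ty -> Prop :=
| d_epsEmp : deriv epsEmp TEps TEps
| d_oneEmp : deriv oneEmp TOne TOne
| d_oneFull : deriv oneFull TOne TEps
| d_par : forall p1 p2 s t s' t', deriv p1 s s' -> deriv p2 t t' ->
    deriv (par p1 p2) (TPar s t) (TPar s' t')
| d_catA : forall p s t s', deriv p s s' -> deriv (catA p) (TCat s t) (TCat s' t)
| d_catB : forall p1 p2 s t t', deriv p2 t t' -> deriv (catB p1 p2) (TCat s t) t'
| d_sumEmp : forall s t, deriv sumEmp (TSum s t) (TSum s t)
| d_inl : forall p s t s', deriv p s s' -> deriv (inl p) (TSum s t) s'
| d_inr : forall p s t t', deriv p t t' -> deriv (inr p) (TSum s t) t'
| d_starEmp : forall s, deriv starEmp (TStar s) (TStar s)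
| d_starDone : forall s, deriv starDone (TStar s) TEps
| d_stA : forall p s s', deriv p s s' -> deriv (stA p) (TStar s) (TCat s' (TStar s))
| d_stB : forall p p' s s', deriv p' (TStar s) s' -> deriv (stB p p') (TStar s) s'.

Inductive pcat : prefix -> prefix -> prefix -> Prop :=
| c_epsEmp : pcat epsEmp epsEmp epsEmp
| c_oneEmp : forall p, has_type p TOne -> pcat oneEmp p p
| c_oneFull : pcat oneFull epsEmp oneFull
| c_par : forall p1 p2 p1' p2' p1'' p2'', pcat p1 p1' p1'' -> pcat p2 p2' p2'' ->
    pcat (par p1 p2) (par p1' p2') (par p1'' p2'')
| c_catA_catA : forall p p' p'', pcat p p' p'' -> pcat (catA p) (catA p') (catA p'')
| c_catA_catB : forall p p' p'' q, pcat p p' p'' ->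
    pcat (catA p) (catB p' q) (catB p'' q)
| c_catB : forall p p' p'' p''', pcat p' p'' p''' ->
    pcat (catB p p') p'' (catB p p''')
| c_sumEmp : forall p, pcat sumEmp p p
| c_inl : forall p p' p'', pcat p p' p'' -> pcat (inl p) p' (inl p'')
| c_inr : forall p p' p'', pcat p p' p'' -> pcat (inr p) p' (inr p'')
| c_starEmp : forall p, pcat starEmp p p
| c_starDone : pcat starDone epsEmp starDone
| c_stA_catA : forall p p' p'', pcat p p' p'' -> pcat (stA p) (catA p') (stA p'')
| c_stA_catB : forall p p' p'' q, pcat p p' p'' ->
    pcat (stA p) (catB p' q) (stB p'' q)
| c_stB : forall p p' p'' p''', pcat p' p'' p''' ->
    pcat (stB p p') p'' (stB p p''').


(* On the left, [emp s] is exactly the prefix that the concatenation rule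
   for each constructor absorbs at the head of a prefix of type [s]. On the
   right, the derivative is the type still expected after [p]: it is [TEps]
   at a finished leaf, where [epsEmp] is absorbed, and otherwise its empty
   prefix is pushed into the unfinished component of [p]. *)

Lemma emp_pcat (p : prefix) (s : ty) : has_type p s -> pcat (emp s) p p.
Proof.
  induction 1; simpl; constructor; try constructor; assumption.
Qed.

Lemma pcat_emp (p : prefix) (s s' : ty) : deriv p s s' -> pcat p (emp s') p.
Proof.
  induction 1; simpl; repeat constructor; assumption.
Qed.

Theorem mainTheorem7 (s s' : ty) (p : prefix) :
  has_type p s -> deriv p s s' ->
  pcat (emp s) p p /\ pcat p (emp s') p.
Proof.
  intros p_s p_deriv; split.
  - exact (emp_pcat p s p_s).
  - exact (pcat_emp p s s' p_deriv).
Qed.
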